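(* Let $\alpha\in\mathbb{C}^N$. For any distinct $i,j,k\in\{1,\dots,N\}$, $$\partial_kM_{i,j}(\alpha)-\partial_iM_{j,k}(\alpha)=-\alpha_j\frac{x_k-x_i}{(x_i-x_j)(x_j-x_k)}M_{i,k}(\alpha)-\frac{\alpha_k}{x_j-x_k}M_{i,j}(\alpha)-\frac{\alpha_i}{x_i-x_j}M_{j,k}(\alpha).$$ Moreover, if $\alpha_j\ne 0$ for all $1\le j\le N$, the left ideal $\mathcal{I}(\alpha)\subset\mathcal{R}$ generated by all $M_{p,q}(\alpha)$, $1\le p\ne q\le N$, is generated by $M_{1,2}(\alpha),M_{2,3}(\alpha),\dots,M_{N-1,N}(\alpha)$.
   Context: $x=(x_1,\dots,x_N)$, $\partial_p=\partial/\partial x_p$. $\mathcal{R}=\mathbb{C}[x_1,\dots,x_N,\prod_{a<b}(x_a-x_b)^{-1}]\langle\partial_1,\dots,\partial_N\rangle$ is the ring of differential operators with coefficients in the localization of the polynomial ring at $\prod_{a<b}(x_a-x_b)$. For $p\ne q$: $M_{p,q}(\alpha)=\partial_p\partial_q+\frac{\alpha_q}{x_p-x_q}\partial_p+\frac{\alpha_p}{x_q-x_p}\partial_q$ (note $M_{p,q}(\alpha)=M_{q,p}(\alpha)$). *)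

From HB Require Import structures.
From mathcomp Require Import all_boot all_order all_algebra.
From mathcomp Require Import fraction.
From mathcomp Require Import complex.
From mathcomp Require Import reals.
From mathcomp Require Import mpoly.

Set Implicit Arguments.
Unset Strict Implicit.
Unset Printing Implicit Defensive.

Import Order.TTheory GRing.Theory Num.Theory.
Local Open Scope ring_scope.

Section DiffOps.
Variable R : realType.
Variable N : nat.

Definition CC := (R[i])%type.

Definition Pol := {mpoly CC[N]}.

(* its field of fractions C(x_1,...,x_N); the ring
   C[x, prod_{a<b}(x_a-x_b)^{-1}] is a subring of it *)
Definition K := {fraction Pol}.

Definition polF (p : Pol) : K := tofrac p.

Definition xv (p : 'I_N) : K := polF 'X_p.

Definition cst (c : CC) : K := polF (c%:MP).

Definition Delta : Pol :=
  \prod_(a < N) \prod_(b < N | (a < b)%N) ('X_a - 'X_b).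

(* the localization A = C[x, Delta^{-1}], as a subset of K *)
Definition inA (f : K) : Prop :=
  exists (p : Pol) (k : nat), f = polF p / polF (Delta ^+ k).

Definition pderiv (i : 'I_N) (f : K) : K :=
  let r := repr f in
  let n := \n_r in let d := \d_r in
  (polF (mderiv i n * d - n * mderiv i d)) / (polF d) ^+ 2.

(* Operators act on K; the ring R of the paper is the ring of operators
   g |-> sum_beta c_beta * d^beta g with coefficients c_beta in A. *)
Definition Op := K -> K.

Definition opD (i : 'I_N) : Op := pderiv i.
Definition opcomp (P Q : Op) : Op := fun g => P (Q g).
Definition opadd (P Q : Op) : Op := fun g => P g + Q g.
Definition opsub (P Q : Op) : Op := fun g => P g - Q g.
Definition opscale (c : K) (P : Op) : Op := fun g => c * P g.

Definition dmono (beta : seq 'I_N) (g : K) : K := foldr pderiv g beta.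

Definition inDiffRing (P : Op) : Prop :=
  exists (m : nat) (c : 'I_m -> K) (beta : 'I_m -> seq 'I_N),
    (forall k, inA (c k)) /\
    forall g, P g = \sum_(k < m) c k * dmono (beta k) g.

Definition inLeftIdeal (S : Op -> Prop) (T : Op) : Prop :=
  exists (m : nat) (r s : 'I_m -> Op),
    (forall k, inDiffRing (r k) /\ S (s k)) /\
    forall g, T g = \sum_(k < m) r k (s k g).

Definition Mop (alpha : 'I_N -> CC) (p q : 'I_N) : Op :=
  fun g => pderiv p (pderiv q g)
           + (cst (alpha q) / (xv p - xv q)) * pderiv p g
           + (cst (alpha p) / (xv q - xv p)) * pderiv q g.

Definition allM (alpha : 'I_N -> CC) (T : Op) : Prop :=
  exists p q : 'I_N, p != q /\ T = Mop alpha p q.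

(* the set {M_{1,2}, M_{2,3}, ..., M_{N-1,N}} (0-based: M_{i,i+1}, i+1 < N) *)
Definition consecM (alpha : 'I_N -> CC) (T : Op) : Prop :=
  exists (p q : 'I_N), (val q = (val p).+1)%N /\ T = Mop alpha p q.

End DiffOps.

Arguments cst {R N}.
Arguments xv {R N}.
Arguments pderiv {R N}.
Arguments Mop {R N}.
Arguments allM {R N}.
Arguments consecM {R N}.
Arguments inLeftIdeal {R N}.
Arguments inDiffRing {R N}.

From HB Require Import structures.
From mathcomp Require Import all_boot all_order all_algebra.
From mathcomp Require Import fraction complex reals mpoly generic_quotient ring.
Import GRing.Theory Num.Theory.
Local Open Scope ring_scope.
Set Implicit Arguments.
Unset Strict Implicit.
Unset Printing Implicit Defensive.

(* The identity is a computation in the differential field C(x_1,...,x_N):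
   partial derivatives commute, and the coefficients of M_{p,q} are
   annihilated by d_k for k outside {p,q}, so both sides reduce to the same
   rational expression in the derivatives of g.  Solving the identity for
   M_{i,k} is possible as soon as alpha_j <> 0, and the inverse of the
   coefficient -alpha_j (x_k-x_i)/((x_i-x_j)(x_j-x_k)) lies in
   C[x, Delta^-1]; hence M_{i,k} belongs to the left ideal generated by
   M_{i,j} and M_{j,k}, and induction on k - i reduces every M_{p,q} to
   the consecutive ones. *)

Section FractionDerivation.
Variable P : idomainType.
Local Notation F := {fraction P}.

Lemma frac_numden (f : F) : f = tofrac \n_(repr f) / tofrac \d_(repr f).
Proof.
have d0 : \d_(repr f) != 0 := denom_ratioP (repr f).
apply: (canRL (mulfK _)); first by rewrite tofrac_eq0.
rewrite -{1}[f]reprK; set x := repr f.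
unlock tofrac; rewrite /= !piE; apply/eqmodP.
by rewrite /= equivfE !numden_Ratio ?oner_neq0 ?mulr1 ?mulf_neq0 // mulrC.
Qed.

Lemma tofrac_div_eq (a b c e : P) : b != 0 -> e != 0 ->
  (tofrac a / tofrac b == tofrac c / tofrac e) = (a * e == c * b).
Proof. by move=> b0 e0; rewrite eqr_div ?tofrac_eq0 // -!rmorphM tofrac_eq. Qed.

Section Derivation.
Variable δ : P -> P.
Hypothesis derivD : {morph δ : x y / x + y}.
Hypothesis derivM : forall x y, δ (x * y) = δ x * y + x * δ y.

Lemma derivB : {morph δ : x y / x - y}.
Proof. by move=> x y; apply: (addIr (δ y)); rewrite -derivD !subrK. Qed.

Lemma deriv0 : δ 0 = 0.
Proof. by have := derivB 0 0; rewrite !subrr. Qed.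

Definition frac_deriv (f : F) : F :=
  let r := repr f in
  let n := \n_r in let d := \d_r in
  tofrac (δ n * d - n * δ d) / (tofrac d) ^+ 2.

Lemma frac_derivE (n d : P) : d != 0 ->
  frac_deriv (tofrac n / tofrac d) = tofrac (δ n * d - n * δ d) / tofrac (d ^+ 2).
Proof.
move=> d_neq0; rewrite /frac_deriv -rmorphXn.
set f := tofrac n / tofrac d.
have := frac_numden f; set n' := \n_(repr f); set d' := \d_(repr f) => fE.
have d'_neq0 : d' != 0 := denom_ratioP (repr f).
have cross : n * d' - n' * d = 0.
  by apply/eqP; rewrite subr_eq0 -tofrac_div_eq // -fE.
have dcross : δ n * d' + n * δ d' - (δ n' * d + n' * δ d) = 0.
  by rewrite -!derivM -derivB cross deriv0.
apply/eqP; rewrite tofrac_div_eq ?expf_neq0 // -subr_eq0; apply/eqP.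
transitivity ((δ d' * d + δ d * d') * (n * d' - n' * d)
              - d' * d * (δ n * d' + n * δ d' - (δ n' * d + n' * δ d))).
  by ring.
by rewrite cross dcross !mulr0 subrr.
Qed.

Lemma frac_derivD : {morph frac_deriv : f g / f + g}.
Proof.
move=> f g; rewrite [f]frac_numden [g]frac_numden.
set a := \n_(repr f); set b := \d_(repr f); set c := \n_(repr g); set e := \d_(repr g).
have b0 : b != 0 := denom_ratioP (repr f).
have e0 : e != 0 := denom_ratioP (repr g).
rewrite addf_div ?tofrac_eq0 // -!rmorphM -rmorphD !frac_derivE ?mulf_neq0 //.
rewrite addf_div ?tofrac_eq0 ?expf_neq0 // -!rmorphM -rmorphD.
apply/eqP; rewrite tofrac_div_eq ?mulf_neq0 ?expf_neq0 //; apply/eqP.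
rewrite derivD !derivM; ring.
Qed.

Lemma frac_derivM f g : frac_deriv (f * g) = frac_deriv f * g + f * frac_deriv g.
Proof.
rewrite [f]frac_numden [g]frac_numden.
set a := \n_(repr f); set b := \d_(repr f); set c := \n_(repr g); set e := \d_(repr g).
have b0 : b != 0 := denom_ratioP (repr f).
have e0 : e != 0 := denom_ratioP (repr g).
rewrite mulf_div -!rmorphM !frac_derivE ?mulf_neq0 // !mulf_div -!rmorphM.
rewrite addf_div ?tofrac_eq0 ?mulf_neq0 ?expf_neq0 // -!rmorphM -rmorphD.
apply/eqP; rewrite tofrac_div_eq ?mulf_neq0 ?expf_neq0 //; apply/eqP.
rewrite !derivM; ring.
Qed.

Lemma frac_deriv0 : frac_deriv 0 = 0.
Proof. by apply: (addrI (frac_deriv 0)); rewrite -frac_derivD !addr0. Qed.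

End Derivation.

Section CommutingDerivations.
Variables δ1 δ2 : P -> P.
Hypothesis deriv1D : {morph δ1 : x y / x + y}.
Hypothesis deriv2D : {morph δ2 : x y / x + y}.
Hypothesis deriv1M : forall x y, δ1 (x * y) = δ1 x * y + x * δ1 y.
Hypothesis deriv2M : forall x y, δ2 (x * y) = δ2 x * y + x * δ2 y.
Hypothesis deriv_comm : forall x, δ1 (δ2 x) = δ2 (δ1 x).

Lemma frac_deriv_comm f :
  frac_deriv δ1 (frac_deriv δ2 f) = frac_deriv δ2 (frac_deriv δ1 f).
Proof.
rewrite [f]frac_numden; set a := \n_(repr f); set b := \d_(repr f).
have b0 : b != 0 := denom_ratioP (repr f).
rewrite (frac_derivE deriv1D) // (frac_derivE deriv2D) //.
rewrite (frac_derivE deriv1D) ?expf_neq0 // (frac_derivE deriv2D) ?expf_neq0 //.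
congr (tofrac _ / _).
rewrite !(derivB deriv1D) !(derivB deriv2D) !expr2 !deriv1M !deriv2M.
rewrite [δ1 (δ2 a)]deriv_comm [δ1 (δ2 b)]deriv_comm; ring.
Qed.

End CommutingDerivations.
End FractionDerivation.

Section TriangleIdentity.
Variables (F : fieldType) (I : eqType) (D : I -> F -> F) (x a : I -> F).
Hypothesis DD : forall i, {morph D i : f g / f + g}.
Hypothesis DM : forall i f g, D i (f * g) = D i f * g + f * D i g.
Hypothesis D_comm : forall i j f, D i (D j f) = D j (D i f).
Hypothesis D_coef : forall k p q r, p != q -> k != p -> k != q ->
  D k (a r / (x p - x q)) = 0.
Hypothesis xB_neq0 : forall p q, p != q -> x p - x q != 0.

Definition Mder p q g :=
  D p (D q g) + a q / (x p - x q) * D p g + a p / (x q - x p) * D q g.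

Lemma Mder_sym p q g : Mder p q g = Mder q p g.
Proof. by rewrite /Mder D_comm addrAC. Qed.

Lemma Mder_triangle i j k g : i != j -> j != k -> i != k ->
  D k (Mder i j g) - D i (Mder j k g)
  = - (a j * ((x k - x i) / ((x i - x j) * (x j - x k)))) * Mder i k g
    - (a k / (x j - x k)) * Mder i j g
    - (a i / (x i - x j)) * Mder j k g.
Proof.
move=> ij jk ik.
have [ji kj ki] : [/\ j != i, k != j & k != i] by rewrite !(eq_sym _ i) (eq_sym k).
rewrite /Mder !DD (DM k (a j / _)) (DM k (a i / _)) (DM i (a k / _)) (DM i (a j / _)).
rewrite (D_coef _ ij ki kj) (D_coef _ ji kj ki) (D_coef _ jk ij ik) (D_coef _ kj ik ij).
rewrite !mul0r !add0r (D_comm k i (D j g)) (D_comm k j g) (D_comm k i g) (D_comm i j g).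
have := xB_neq0 ij; have := xB_neq0 ji; have := xB_neq0 jk.
have := xB_neq0 kj; have := xB_neq0 ik; have := xB_neq0 ki.
move: (x i) (x j) (x k) (a i) (a j) (a k) (D i g) (D j g) (D k g).
move=> xi xj xk ai aj ak gi gj gk h1 h2 h3 h4 h5 h6.
by field; rewrite h1 h2 h3 h4 h5 h6.
Qed.

Lemma Mder_solve i j k g : i != j -> j != k -> i != k -> a j != 0 ->
  Mder i k g = (x i - x j) * (x j - x k) / a j / (x k - x i) *
    (D i (Mder j k g) - D k (Mder i j g)
     - a k / (x j - x k) * Mder i j g - a i / (x i - x j) * Mder j k g).
Proof.
move=> ij jk ik aj0; have := Mder_triangle g ij jk ik.
rewrite -[D i _ - _]opprB => ->.
have ki : k != i by rewrite eq_sym.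
have := xB_neq0 ij; have := xB_neq0 jk; have := xB_neq0 ki.
move: (x i) (x j) (x k) (a i) (a k) (Mder i k g) (Mder i j g) (Mder j k g) aj0.
move=> xi xj xk ai ak Mik Mij Mjk h1 h2 h3 h4.
by field; rewrite h1 h2 h3 h4.
Qed.

End TriangleIdentity.

Section PartialDerivatives.
Context {R : realType} {N : nat}.
Local Notation K := (K R N).
Local Notation Pol := (Pol R N).
Local Notation polF := (@polF R N).
Local Notation pderiv := (@pderiv R N).
Local Notation xv := (@xv R N).
Local Notation cst := (@cst R N).

Lemma pderivE (i : 'I_N) : pderiv i =1 frac_deriv (mderiv i).
Proof. by []. Qed.

Lemma pderivD i : {morph pderiv i : f g / f + g}.
Proof. move=> f g; rewrite !pderivE; exact: frac_derivD (mderivD i) (mderivM i) f g. Qed.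

Lemma pderivM i (f g : K) : pderiv i (f * g) = pderiv i f * g + f * pderiv i g.
Proof. rewrite !pderivE; exact: frac_derivM (mderivD i) (mderivM i) f g. Qed.

Lemma pderiv0 i : pderiv i (0 : K) = 0.
Proof. rewrite pderivE; exact: frac_deriv0 (mderivD i) (mderivM i). Qed.

Lemma pderiv_comm i j (f : K) : pderiv i (pderiv j f) = pderiv j (pderiv i f).
Proof.
rewrite !pderivE; apply: frac_deriv_comm => //; [exact: mderivD | exact: mderivD |
  exact: mderivM | exact: mderivM | by move=> p; rewrite mderiv_comm].
Qed.

Lemma pderiv_frac i (n d : Pol) : d != 0 ->
  pderiv i (polF n / polF d) = polF (mderiv i n * d - n * mderiv i d) / polF (d ^+ 2).
Proof. rewrite pderivE; exact: frac_derivE (mderivD i) (mderivM i) n d. Qed.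

Lemma mderivX1 (i j : 'I_N) : mderiv i ('X_j : Pol) = (j == i)%:R.
Proof.
rewrite mderivX mnm1E; case: eqP => [->|_]; last by rewrite scale0r.
have -> : (U_(i) - U_(i))%MM = 0%MM by apply/mnmP=> k; rewrite mnmBE mnm0E subnn.
by rewrite mpolyX0 scale1r.
Qed.

Lemma mpolyXB_neq0 (p q : 'I_N) : p != q -> ('X_p - 'X_q : Pol) != 0.
Proof.
move=> pq; apply/eqP => /(congr1 (mderiv p)).
by rewrite mderivB !mderivX1 eqxx eq_sym (negbTE pq) mderiv0 subr0 => /eqP; rewrite oner_eq0.
Qed.

Lemma xvB (p q : 'I_N) : xv p - xv q = polF ('X_p - 'X_q).
Proof. by rewrite /xv /polF rmorphB. Qed.

Lemma xvB_neq0 (p q : 'I_N) : p != q -> xv p - xv q != 0 :> K.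
Proof. by move=> pq; rewrite xvB /polF tofrac_eq0 mpolyXB_neq0. Qed.

Lemma pderiv_coef (k p q : 'I_N) c : p != q -> k != p -> k != q ->
  pderiv k (cst c / (xv p - xv q)) = 0 :> K.
Proof.
move=> pq kp kq; rewrite xvB /cst pderiv_frac ?mpolyXB_neq0 //.
rewrite mderivC mderivB !mderivX1 eq_sym (negbTE kp) eq_sym (negbTE kq).
by rewrite subrr mulr0 mul0r subrr /polF rmorph0 mul0r.
Qed.

Lemma MopE alpha (p q : 'I_N) (g : K) :
  Mop alpha p q g = Mder pderiv xv (cst \o alpha) p q g.
Proof. by []. Qed.

Lemma Mop_triangle alpha (i j k : 'I_N) (g : K) : i != j -> j != k -> i != k ->
  pderiv k (Mop alpha i j g) - pderiv i (Mop alpha j k g)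
  = - (cst (alpha j) * ((xv k - xv i) / ((xv i - xv j) * (xv j - xv k))))
        * Mop alpha i k g
    - (cst (alpha k) / (xv j - xv k)) * Mop alpha i j g
    - (cst (alpha i) / (xv i - xv j)) * Mop alpha j k g.
Proof.
rewrite !MopE; apply: Mder_triangle; [exact: pderivD | exact: pderivM |
  exact: pderiv_comm | by move=> *; apply: pderiv_coef | exact: xvB_neq0].
Qed.

Lemma cst_neq0 c : c != 0 -> cst c != 0 :> K.
Proof. by move=> c0; rewrite /cst /polF tofrac_eq0 mpolyC_eq0. Qed.

Lemma Mop_sym alpha (p q : 'I_N) (g : K) : Mop alpha p q g = Mop alpha q p g.
Proof. by rewrite !MopE; apply: Mder_sym; apply: pderiv_comm. Qed.

Lemma Mop_solve alpha (i j k : 'I_N) (g : K) :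
  i != j -> j != k -> i != k -> alpha j != 0 ->
  Mop alpha i k g = (xv i - xv j) * (xv j - xv k) / cst (alpha j) / (xv k - xv i) *
    (pderiv i (Mop alpha j k g) - pderiv k (Mop alpha i j g)
     - cst (alpha k) / (xv j - xv k) * Mop alpha i j g
     - cst (alpha i) / (xv i - xv j) * Mop alpha j k g).
Proof.
move=> ij jk ik /cst_neq0 aj; rewrite !MopE.
have D_coef (k p q r : 'I_N) := @pderiv_coef k p q (alpha r).
exact (Mder_solve pderivD pderivM pderiv_comm D_coef xvB_neq0
  g ij jk ik aj).
Qed.

End PartialDerivatives.

Section Localization.
Context {R : realType} {N : nat}.
Local Notation K := (K R N).
Local Notation Pol := (Pol R N).
Local Notation polF := (@polF R N).
Local Notation pderiv := (@pderiv R N).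
Local Notation xv := (@xv R N).
Local Notation cst := (@cst R N).
Local Notation inA := (@inA R N).
Local Notation Delta := (Delta R N).

Lemma Delta_neq0 : Delta != 0.
Proof.
apply/prodf_neq0 => a _; apply/prodf_neq0 => b ab.
by apply: mpolyXB_neq0; apply: contraTneq ab => ->; rewrite ltnn.
Qed.

Lemma mpolyXB_dvd_Delta (p q : 'I_N) : (p < q)%N -> exists Q : Pol, Delta = ('X_p - 'X_q) * Q.
Proof.
move=> pq; rewrite /Delta (bigD1 p) //= [X in X * _](bigD1 q) //=.
by eexists; rewrite -mulrA.
Qed.

Lemma inA_polF (p : Pol) : inA (polF p).
Proof. by exists p, 0%N; rewrite expr0 /polF rmorph1 divr1. Qed.

Lemma inA_cst c : inA (cst c).
Proof. exact: inA_polF. Qed.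

Lemma inA_xvB (p q : 'I_N) : inA (xv p - xv q).
Proof. by rewrite xvB; apply: inA_polF. Qed.

Lemma inAN1 : inA (-1).
Proof. by have := inA_polF (-1); rewrite /polF rmorphN1. Qed.

Lemma inAM (c d : K) : inA c -> inA d -> inA (c * d).
Proof.
move=> [p [k ->]] [q [l ->]]; exists (p * q), (k + l)%N.
by rewrite mulf_div /polF -!rmorphM exprD.
Qed.

Lemma inA_pderiv i (c : K) : inA c -> inA (pderiv i c).
Proof.
move=> [p [k ->]]; rewrite pderiv_frac ?expf_neq0 ?Delta_neq0 //.
by eexists; exists (k * 2)%N; rewrite exprM.
Qed.

Lemma inA_cstV c : c != 0 -> inA (cst c)^-1.
Proof.
move=> c0; suff -> : (cst c)^-1 = cst c^-1 by apply: inA_cst.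
by apply: mulr1_eq; rewrite /cst /polF -rmorphM -mpolyCM mulfV // mpolyC1 rmorph1.
Qed.

Lemma inA_xvBV (p q : 'I_N) : p != q -> inA (xv p - xv q)^-1.
Proof.
wlog pq : p q / (p < q)%N.
  move=> lt_case pq; case: (ltngtP p q) => [lt|qp|/val_inj pq']; first exact: lt_case.
    rewrite -opprB invrN -mulN1r; apply: inAM inAN1 (lt_case _ _ qp _).
    by rewrite eq_sym.
  by rewrite pq' eqxx in pq.
move=> _; have [Q DeltaE] := mpolyXB_dvd_Delta pq.
have Q0 : polF Q != 0.
  by rewrite /polF tofrac_eq0; apply: contraNneq Delta_neq0 => Q0; rewrite DeltaE Q0 mulr0.
exists Q, 1%N; rewrite expr1 DeltaE xvB /polF rmorphM.
by rewrite invfM mulrCA mulfV ?mulr1.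
Qed.

End Localization.

Section OrdinalConcat.
Variables (A : Type) (m n : nat) (a : 'I_m -> A) (b : 'I_n -> A).

Definition fun_cat (k : 'I_(m + n)) : A :=
  match split k with inl i => a i | inr j => b j end.

Lemma fun_catP (Q : A -> Prop) :
  (forall i, Q (a i)) -> (forall j, Q (b j)) -> forall k, Q (fun_cat k).
Proof. by move=> Qa Qb k; rewrite /fun_cat; case: (split k). Qed.

Lemma big_fun_cat (V : zmodType) (G : A -> V) :
  \sum_(k < m + n) G (fun_cat k) = \sum_(i < m) G (a i) + \sum_(j < n) G (b j).
Proof.
rewrite big_split_ord; congr (_ + _); apply: eq_bigr => i _.
  by rewrite /fun_cat -[lshift n i]/(unsplit (inl i)) unsplitK.
by rewrite /fun_cat -[rshift m i]/(unsplit (inr i)) unsplitK.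
Qed.

End OrdinalConcat.

Section Operators.
Context {R : realType} {N : nat}.
Local Notation K := (K R N).
Local Notation Op := (Op R N).
Local Notation polF := (@polF R N).
Local Notation pderiv := (@pderiv R N).
Local Notation inA := (@inA R N).
Local Notation dmono := (@dmono R N).

Inductive diffop : Op -> Prop :=
| diffop0 : diffop (fun _ => 0)
| diffopD P Q : diffop P -> diffop Q -> diffop (fun g => P g + Q g)
| diffop_mono c beta : inA c -> diffop (fun g => c * dmono beta g)
| diffop_ext P Q : diffop P -> P =1 Q -> diffop Q.

Inductive ideal_span (S : Op -> Prop) : Op -> Prop :=
| ideal_span0 : ideal_span S (fun _ => 0)
| ideal_spanD T1 T2 :
    ideal_span S T1 -> ideal_span S T2 -> ideal_span S (fun g => T1 g + T2 g)
| ideal_span_gen P s : diffop P -> S s -> ideal_span S (fun g => P (s g))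
| ideal_span_ext T T' : ideal_span S T -> T =1 T' -> ideal_span S T'.

Lemma inDiffRingP (P : Op) : inDiffRing P <-> diffop P.
Proof.
split.
  case=> m [c [beta [Ac E]]]; apply: (diffop_ext _ (fun g => esym (E g))).
  clear E; elim: m c beta Ac => [|m IH] c beta Ac.
    by apply: (diffop_ext diffop0) => g; rewrite big_ord0.
  apply: (diffop_ext (diffopD (IH _ _ (fun k => Ac (widen_ord (leqnSn m) k)))
                              (diffop_mono (beta ord_max) (Ac ord_max)))).
  by move=> g; rewrite big_ord_recr.
elim=> {P} [|P Q _ [m1 [c1 [b1 [A1 E1]]]] _ [m2 [c2 [b2 [A2 E2]]]]
            |c beta Ac|P Q _ [m [c [b [A E]]]] PQ].
- by exists 0%N, (fun _ => 0), (fun _ => [::]); split=> [[]|g]; rewrite ?big_ord0.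
- pose cb := fun_cat (fun i => (c1 i, b1 i)) (fun j => (c2 j, b2 j)).
  exists (m1 + m2)%N, (fun k => (cb k).1), (fun k => (cb k).2); split.
    exact: (fun_catP (Q := fun x => inA x.1)).
  by move=> g; rewrite E1 E2 (big_fun_cat _ _ (fun x => x.1 * dmono x.2 g)).
- by exists 1%N, (fun _ => c), (fun _ => beta); split=> // g; rewrite big_ord1.
- by exists m, c, b; split=> // g; rewrite -PQ E.
Qed.

Lemma inLeftIdealP (S : Op -> Prop) (T : Op) : inLeftIdeal S T <-> ideal_span S T.
Proof.
split.
  case=> m [r [s [rs E]]]; apply: (ideal_span_ext _ (fun g => esym (E g))).
  clear E; elim: m r s rs => [|m IH] r s rs.
    by apply: (ideal_span_ext (ideal_span0 S)) => g; rewrite big_ord0.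
  have [r_diffop Ss] := rs ord_max.
  apply: (ideal_span_ext (ideal_spanD (IH _ _ (fun k => rs (widen_ord (leqnSn m) k)))
           (ideal_span_gen (proj1 (inDiffRingP _) r_diffop) Ss))).
  by move=> g; rewrite big_ord_recr.
elim=> {T} [|T1 T2 _ [m1 [r1 [s1 [h1 E1]]]] _ [m2 [r2 [s2 [h2 E2]]]]
            |P s dP Ss|T T' _ [m [r [s [h E]]]] TT'].
- by exists 0%N, (fun _ => id), (fun _ => id); split=> [[]|g]; rewrite ?big_ord0.
- pose rs := fun_cat (fun i => (r1 i, s1 i)) (fun j => (r2 j, s2 j)).
  exists (m1 + m2)%N, (fun k => (rs k).1), (fun k => (rs k).2); split.
    exact: (fun_catP (Q := fun x => inDiffRing x.1 /\ S x.2)).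
  by move=> g; rewrite E1 E2 (big_fun_cat _ _ (fun x => x.1 (x.2 g))).
- exists 1%N, (fun _ => P), (fun _ => s); split; last by move=> g; rewrite big_ord1.
  by move=> _; split=> //; apply/inDiffRingP.
- by exists m, r, s; split=> // g; rewrite -TT' E.
Qed.

Lemma dmonoD beta : {morph dmono beta : f g / f + g}.
Proof. by move=> f g; elim: beta => //= i beta ->; rewrite pderivD. Qed.

Lemma dmono0 beta : dmono beta 0 = 0.
Proof. by elim: beta => //= i beta ->; rewrite pderiv0. Qed.

Lemma diffop_additive (P : Op) : diffop P -> {morph P : f g / f + g} /\ P 0 = 0.
Proof.
elim=> {P} [|P Q _ [PD P0] _ [QD Q0]|c beta _|P Q _ [PD P0] PQ].
- by split=> [f g|]; first rewrite addr0.
- by split=> [f g|]; [rewrite PD QD addrACA | rewrite P0 Q0 addr0].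
- by split=> [f g|]; [rewrite dmonoD mulrDr | rewrite dmono0 mulr0].
- by split=> [f g|]; rewrite -!PQ // PD.
Qed.

Lemma diffop_id : diffop (fun g => g).
Proof.
apply: (diffop_ext (diffop_mono [::] (inA_polF 1))) => g.
by rewrite /polF rmorph1 mul1r.
Qed.

Lemma diffop_scale (c : K) (P : Op) : inA c -> diffop P -> diffop (fun g => c * P g).
Proof.
move=> Ac; elim=> {P} [|P Q _ cP _ cQ|d beta Ad|P Q _ cP PQ].
- by apply: (diffop_ext diffop0) => g; rewrite mulr0.
- by apply: (diffop_ext (diffopD cP cQ)) => g; rewrite mulrDr.
- by apply: (diffop_ext (diffop_mono beta (inAM Ac Ad))) => g; rewrite mulrA.
- by apply: (diffop_ext cP) => g; rewrite PQ.
Qed.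

Lemma diffop_deriv i (P : Op) : diffop P -> diffop (fun g => pderiv i (P g)).
Proof.
elim=> {P} [|P Q _ dP _ dQ|c beta Ac|P Q _ dP PQ].
- by apply: (diffop_ext diffop0) => g; rewrite pderiv0.
- by apply: (diffop_ext (diffopD dP dQ)) => g; rewrite pderivD.
- apply: (diffop_ext (diffopD (diffop_mono beta (inA_pderiv i Ac))
                              (diffop_mono (i :: beta) Ac))) => g.
  by rewrite pderivM.
- by apply: (diffop_ext dP) => g; rewrite PQ.
Qed.

Lemma diffop_comp (P Q : Op) : diffop P -> diffop Q -> diffop (fun g => P (Q g)).
Proof.
move=> dP dQ; elim: dP => {P} [|P1 P2 _ d1 _ d2|c beta Ac|P1 P2 _ d PP].
- exact: diffop0.
- exact: diffopD d1 d2.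
- apply: diffop_scale Ac _; elim: beta => [|i beta IH] /=; last exact: diffop_deriv.
  exact: diffop_ext dQ _.
- by apply: (diffop_ext d) => g; rewrite PP.
Qed.

Lemma ideal_span_comp (S : Op -> Prop) (P T : Op) :
  diffop P -> ideal_span S T -> ideal_span S (fun g => P (T g)).
Proof.
move=> dP; have [PD P0] := diffop_additive dP.
elim=> {T} [|T1 T2 _ I1 _ I2|Q s dQ Ss|T T' _ IT TT'].
- by apply: (ideal_span_ext (ideal_span0 S)) => g; rewrite P0.
- by apply: (ideal_span_ext (ideal_spanD I1 I2)) => g; rewrite PD.
- exact: ideal_span_gen (diffop_comp dP dQ) Ss.
- by apply: (ideal_span_ext IT) => g; rewrite TT'.
Qed.

Lemma ideal_span_gen1 (S : Op -> Prop) (s : Op) : S s -> ideal_span S s.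
Proof. by move=> Ss; apply: (ideal_span_ext (ideal_span_gen diffop_id Ss)). Qed.

Lemma ideal_span_scale (S : Op -> Prop) (c : K) (T : Op) :
  inA c -> ideal_span S T -> ideal_span S (fun g => c * T g).
Proof. by move=> Ac; apply: ideal_span_comp; apply: diffop_scale Ac diffop_id. Qed.

Lemma ideal_spanB (S : Op -> Prop) (T1 T2 : Op) :
  ideal_span S T1 -> ideal_span S T2 -> ideal_span S (fun g => T1 g - T2 g).
Proof.
move=> I1 I2; apply: (ideal_span_ext (ideal_spanD I1 (ideal_span_scale inAN1 I2))).
by move=> g; rewrite mulN1r.
Qed.

Lemma ideal_span_deriv (S : Op -> Prop) i (T : Op) :
  ideal_span S T -> ideal_span S (fun g => pderiv i (T g)).
Proof. by apply: ideal_span_comp; apply: diffop_deriv diffop_id. Qed.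

Lemma ideal_span_sub (S1 S2 : Op -> Prop) (T : Op) :
  (forall s, S1 s -> ideal_span S2 s) -> ideal_span S1 T -> ideal_span S2 T.
Proof.
move=> S12; elim=> {T} [|T1 T2 _ I1 _ I2|P s dP S1s|T T' _ IT TT'].
- exact: ideal_span0.
- exact: ideal_spanD I1 I2.
- exact: ideal_span_comp dP (S12 s S1s).
- exact: ideal_span_ext IT TT'.
Qed.

End Operators.

Section ConsecutiveGenerators.
Variables (R : realType) (N : nat) (alpha : 'I_N -> CC R).
Hypothesis alpha_neq0 : forall j, alpha j != 0.

Lemma Mop_ideal_triangle (S : Op R N -> Prop) (i j k : 'I_N) :
  i != j -> j != k -> i != k ->
  ideal_span S (Mop alpha i j) -> ideal_span S (Mop alpha j k) ->
  ideal_span S (Mop alpha i k).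
Proof.
move=> ij jk ik Iij Ijk; have ki : k != i by rewrite eq_sym.
have Au : inA ((xv i - xv j) * (xv j - xv k) / cst (alpha j) / (xv k - xv i)).
  by apply: inAM (inA_xvBV ki); apply: inAM (inA_cstV (alpha_neq0 j));
     apply: inAM; apply: inA_xvB.
have Ae : inA (cst (alpha k) / (xv j - xv k)) by apply: inAM (inA_cst _) (inA_xvBV jk).
have Af : inA (cst (alpha i) / (xv i - xv j)) by apply: inAM (inA_cst _) (inA_xvBV ij).
apply: (ideal_span_ext (ideal_span_scale Au (ideal_spanB (ideal_spanB (ideal_spanB
          (ideal_span_deriv i Ijk) (ideal_span_deriv k Iij))
          (ideal_span_scale Ae Iij)) (ideal_span_scale Af Ijk)))).
by move=> g; rewrite [RHS](Mop_solve g ij jk ik (alpha_neq0 j)).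
Qed.

Lemma ideal_span_consecM_lt (p q : 'I_N) :
  (p < q)%N -> ideal_span (consecM alpha) (Mop alpha p q).
Proof.
case: q => q; elim: q => [|q IH] qN //= pq.
pose j := Ordinal (ltnW qN); pose k := Ordinal qN.
have Ijk : ideal_span (consecM alpha) (Mop alpha j k) by apply: ideal_span_gen1; exists j, k.
move: pq; rewrite ltnS leq_eqVlt => /predU1P [pj | pj].
  by have -> : p = j by apply: val_inj.
apply: (@Mop_ideal_triangle _ p j k) (IH _ pj) Ijk.
- by rewrite -val_eqE /= (ltn_eqF pj).
- by rewrite -val_eqE /= (ltn_eqF (ltnSn q)).
- by rewrite -val_eqE /= (ltn_eqF (leqW pj)).
Qed.

Lemma ideal_span_consecM (p q : 'I_N) :
  p != q -> ideal_span (consecM alpha) (Mop alpha p q).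
Proof.
case: (ltngtP p q) => [pq _|qp _|/val_inj-> /eqP//]; first exact: ideal_span_consecM_lt.
by apply: ideal_span_ext (ideal_span_consecM_lt qp) _ => g; apply: Mop_sym.
Qed.

End ConsecutiveGenerators.

Theorem mainTheorem8 (R : realType) (N : nat) (alpha : 'I_N -> CC R) :
  (forall i j k : 'I_N, i != j -> j != k -> i != k ->
     forall g : K R N,
       pderiv k (Mop alpha i j g) - pderiv i (Mop alpha j k g)
       = - (cst (alpha j) * ((xv k - xv i) / ((xv i - xv j) * (xv j - xv k))))
             * Mop alpha i k g
         - (cst (alpha k) / (xv j - xv k)) * Mop alpha i j g
         - (cst (alpha i) / (xv i - xv j)) * Mop alpha j k g)
  /\
  ((forall j : 'I_N, alpha j != 0) ->
     forall T : Op R N, inLeftIdeal (allM alpha) T <-> inLeftIdeal (consecM alpha) T).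
Proof.
split=> [i j k ij jk ik g|alpha_neq0 T]; first exact: Mop_triangle.
split=> /inLeftIdealP IT; apply/inLeftIdealP; apply: ideal_span_sub IT.
  by move=> _ [p [q [pq ->]]]; apply: ideal_span_consecM.
move=> _ [p [q [qp ->]]]; apply: ideal_span_gen1; exists p, q; split=> //.
by rewrite -val_eqE qp neq_ltn ltnSn.
Qed.
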